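(* Let $M\cong\mathbb Z^d$, $\Sigma$, $v_1,\ldots,v_n$, $\mathcal A$, $\bar M$, $\bar N$, $\mathbf v_0,\ldots,\mathbf v_n$, $K$ and $\Psi_{\mathbf p}$ be as in the context, with $\mathbb P_\Sigma$ nef-Fano. Then for every $\mathbf p\in K\cap\bar M$ and every $\mathbf n\in\bar N=\mathrm{Hom}(\bar M,\mathbb Z)$, $$\sum_{i=0}^na_i(\mathbf n\cdot\mathbf v_i)\Psi_{\mathbf p+\mathbf v_i}=0,$$ where $a_0=1$.
   Context: $M\cong\mathbb Z^d$ is a lattice with dual $N$; $\Sigma$ is a complete simplicial fan in $M_{\mathbb R}$ with minimal ray generators $v_1,\ldots,v_n$; $\mathbb P_\Sigma$ is nef-Fano (in particular every $v_i$ lies on the boundary of $\mathrm{conv}(v_1,\ldots,v_n)$). For $k\ge0$, $A_k$ is the quotient of $\mathbb C[D_1,\ldots,D_n]$ by the linear elements $\sum_i(\lambda\cdot v_i)D_i$ ($\lambda\in N$) and the monomials $\prod_iD_i^{r_i}$ such that no cone of $\Sigma$ contains all $v_i$ with $r_i>k$; $\mathcal A$ is the direct limit of the $A_k$ under the maps $A_k\to A_{k+l}$ given by multiplication by $\prod_iD_i^l$. Put $D_0=-\sum_iD_i$. Let $\bar M=M\oplus\mathbb Z$, $\mathbf v_i=v_i\oplus1$ ($1\le i\le n$), $\mathbf v_0=\mathbf 0\oplus1$, $K$ the cone spanned by $\mathbf v_0,\ldots,\mathbf v_n$. For $\beta=(b_0,\ldots,b_n)\in\mathbb Z^{n+1}$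 with $b_0\le0$, $\Phi_\beta\in\mathcal A$ is the image of $D_0^{-b_0}\prod_{i=1}^nD_i^{k-b_i}\in A_k$ for $k\ge\max_ib_i$. For $\mathbf p\in K\cap\bar M$, $\Psi_{\mathbf p}=\sum_{\beta:\sum_{i=0}^nb_i\mathbf v_i=-\mathbf p,\ b_0\le0}\Phi_\beta\prod_{i=1}^na_i^{b_i}$, a formal Laurent series in $a_1,\ldots,a_n$ with coefficients in $\mathcal A$. *)

From HB Require Import structures.
From mathcomp Require Import all_boot all_order all_algebra.
From mathcomp Require Import mpoly.
From mathcomp Require Import Rstruct.
From mathcomp Require Import complex.

Set Implicit Arguments.
Unset Strict Implicit.
Unset Printing Implicit Defensive.

Import Order.TTheory GRing.Theory Num.Theory.
Local Open Scope ring_scope.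

Definition RR : rcfType := Rdefinitions.R.
Definition CC : numClosedFieldType := (RR[i])%C.

(* The lattice M = Z^d is 'rV[int]_d; its dual N = Hom(M,Z) is also
   identified with 'rV[int]_d via the standard pairing dotZ. *)
Definition dotZ (d : nat) (x y : 'rV[int]_d) : int := \sum_(j < d) x 0 j * y 0 j.
Definition toR (d : nat) (x : 'rV[int]_d) : 'rV[RR]_d := map_mx intr x.
Definition dotR (d : nat) (x y : 'rV[RR]_d) : RR := \sum_(j < d) x 0 j * y 0 j.

Section Fan.
Variables (d n : nat) (v : 'I_n -> 'rV[int]_d).

Definition coneR (S : {set 'I_n}) (x : 'rV[RR]_d) : Prop :=
  exists c : 'I_n -> RR, (forall i, 0 <= c i) /\ x = \sum_(i in S) c i *: toR (v i).

(* sigma = the cones of Sigma, each recorded by the set of indices of its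
   ray generators: cone(S) = cone{v_i | i in S}. *)
Definition complete_simplicial_fan (sigma : {set {set 'I_n}}) : Prop :=
  [/\ (* closed under faces (faces of a simplicial cone = subsets) *)
      (forall S T : {set 'I_n}, S \in sigma -> T \subset S -> T \in sigma),
      (forall S, S \in sigma -> forall c : 'I_n -> RR,
          \sum_(i in S) c i *: toR (v i) = 0 -> forall i, i \in S -> c i = 0),
      (forall S T : {set 'I_n}, S \in sigma -> T \in sigma -> forall x,
          (coneR S x /\ coneR T x) <-> coneR (S :&: T) x),
      (forall x, exists2 S, S \in sigma & coneR S x) &
      (forall i, [set i] \in sigma)].

Definition minimal_generators : Prop :=
  forall i (m : nat) (w : 'rV[int]_d), (0 < m)%N -> v i = m%:Z *: w -> m = 1%N.

(* P_Sigma nef-Fano: the anticanonical divisor sum_i D_i is nef, i.e. for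
   every cone sigma there is u in N_R with <u,v_i> = 1 for the generators of
   sigma and <u,v_j> <= 1 for all j. *)
Definition nef_fano (sigma : {set {set 'I_n}}) : Prop :=
  forall S, S \in sigma -> exists u : 'rV[RR]_d,
    (forall i, i \in S -> dotR u (toR (v i)) = 1) /\
    (forall j, dotR u (toR (v j)) <= 1).

(* p = (pM, pl) in Mbar = M + Z lies in K = cone(vbar_0, ..., vbar_n),
   vbar_0 = (0,1), vbar_i = (v_i,1). *)
Definition inK (pM : 'rV[int]_d) (pl : int) : Prop :=
  exists (c0 : RR) (c : 'I_n -> RR), 0 <= c0 /\ (forall i, 0 <= c i) /\
    toR pM = \sum_(i < n) c i *: toR (v i) /\
    (pl%:~R : RR) = c0 + \sum_(i < n) c i.

Definition Pol := {mpoly CC[n]}.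

Definition Igen (sigma : {set {set 'I_n}}) (k : nat) (g : Pol) : Prop :=
  (exists lam : 'rV[int]_d, g = \sum_(i < n) (dotZ lam (v i))%:~R *: 'X_i) \/
  (exists r : 'X_{1..n}, g = 'X_[r] /\
     ~ (exists2 S, S \in sigma & forall i, (k < r i)%N -> coneR S (toR (v i)))).

(* membership in the ideal I_k, so that A_k = C[D_1..D_n] / I_k *)
Definition inI (sigma : {set {set 'I_n}}) (k : nat) (f : Pol) : Prop :=
  exists s : seq (Pol * Pol),
    (forall x, x \in s -> Igen sigma k x.2) /\ f = \sum_(x <- s) x.1 * x.2.

Definition Dpow (l : nat) : Pol := \prod_(i < n) 'X_i ^+ l.
Definition D0 : Pol := - \sum_(i < n) 'X_i.

(* An element of the direct limit cA is represented by (k, f), the image of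
   the class of f in A_k. *)
Definition Aelt := (nat * Pol)%type.
Definition A0 : Aelt := (0%N, 0).
Definition Aadd (x y : Aelt) : Aelt :=
  let k := maxn x.1 y.1 in (k, Dpow (k - x.1) * x.2 + Dpow (k - y.1) * y.2).
Definition Ascale (c : CC) (x : Aelt) : Aelt := (x.1, c *: x.2).
(* x = 0 in the direct limit: some transition map A_k -> A_{k+l} kills it *)
Definition Azero (sigma : {set {set 'I_n}}) (x : Aelt) : Prop :=
  exists l : nat, inI sigma (x.1 + l) (Dpow l * x.2).

(* Phi_beta for beta = (b0, b), b0 <= 0: the image of
   D_0^{-b_0} prod_i D_i^{k-b_i} in A_k, k = max_i |b_i| >= max_i b_i. *)
Definition Phi (b0 : int) (b : 'I_n -> int) : Aelt :=
  let k := (\max_(i < n) `|b i|)%N in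
  (k, D0 ^+ `|b0| * \prod_(i < n) 'X_i ^+ `|k%:Z - b i|).

(* Psi_p as a formal Laurent series in a_1..a_n with coefficients in cA:
   the function sending an exponent b in Z^n to the coefficient of
   prod_i a_i^{b_i}.  Given b, beta is forced: b0 = -pl - sum_i b_i. *)
Definition Psi (pM : 'rV[int]_d) (pl : int) (b : 'I_n -> int) : Aelt :=
  let b0 := - pl - \sum_(i < n) b i in
  if (\sum_(i < n) b i *: v i == - pM) && (b0 <= 0) then Phi b0 b else A0.

End Fan.

(* exponent b - e_i : the coefficient of a^b in a_i * F is that of a^(b-e_i) in F *)
Definition shiftE (n : nat) (i : 'I_n) (b : 'I_n -> int) : 'I_n -> int :=
  fun j => b j - (j == i)%:R.

From HB Require Import structures.
From mathcomp Require Import all_boot all_order all_algebra.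
From mathcomp Require Import mpoly.
From mathcomp Require Import Rstruct.
From mathcomp Require Import complex.
From mathcomp Require Import zify ring lra.
Import Order.TTheory GRing.Theory Num.Theory.
Local Open Scope ring_scope.
Set Implicit Arguments.
Unset Strict Implicit.

(* Fix the exponent b and compute in A_N for some N > max_i |b_i|.  Every term
   vanishes unless sum_i b_i v_i = -p_M; then let b_0 <= 0 be the D_0-exponent
   of the a^b-coefficient of Psi_p; the a_i-shifted terms have D_0-exponent
   b_0 + 1 and an extra factor D_i.  If b_0 < 0, the relation D_0 = -sum_i D_i
   turns the sum into D_0^(-b_0-1) prod_i D_i^(N-b_i) * sum_i <n_M,v_i> D_i, a
   multiple of a linear relation.  If b_0 = 0, only n_l prod_i D_i^(N-b_i)
   survives, and it is a Stanley-Reisner monomial: a nef-Fano support function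
   u of a cone containing every v_i with b_i < 0 would give
   pl + 1 <= <u,p_M> <= pl, the upper bound because p lies in K. *)

Section DirectLimit.
Variables (d n : nat) (v : 'I_n -> 'rV[int]_d) (sigma : {set {set 'I_n}}).

Definition Alift (N : nat) (x : Aelt n) : Pol n := Dpow n (N - x.1) * x.2.

Lemma DpowD a c : Dpow n a * Dpow n c = Dpow n (a + c).
Proof. by rewrite /Dpow -big_split; apply: eq_bigr => i _; rewrite exprD. Qed.

Lemma Azero_Alift N (x : Aelt n) :
  (x.1 <= N)%N -> inI v sigma N (Alift N x) -> Azero v sigma x.
Proof. by move=> xN; exists (N - x.1)%N; rewrite subnKC. Qed.

Lemma Alift_add N (x y : Aelt n) : (maxn x.1 y.1 <= N)%N ->
  Alift N (Aadd x y) = Alift N x + Alift N y.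
Proof.
move=> xyN; rewrite /Alift /Aadd /= mulrDr !mulrA !DpowD.
by congr (Dpow n _ * _ + Dpow n _ * _); lia.
Qed.

Lemma Alift_scale N c (x : Aelt n) : Alift N (Ascale c x) = c *: Alift N x.
Proof. by rewrite /Alift /Ascale /= scalerAr. Qed.

Lemma Alift_A0 N : Alift N (A0 n) = 0.
Proof. by rewrite /Alift mulr0. Qed.

Section BigSum.
Variables (N m : nat) (F : 'I_m -> Aelt n).
Hypothesis FN : forall i, ((F i).1 <= N)%N.

Lemma Abig_level : ((\big[@Aadd n/A0 n]_(i < m) F i).1 <= N)%N.
Proof. by elim/big_ind: _ => // x y; rewrite geq_max => -> ->. Qed.

Lemma Alift_big :
  Alift N (\big[@Aadd n/A0 n]_(i < m) F i) = \sum_(i < m) Alift N (F i).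
Proof.
pose P x y := (x.1 <= N)%N /\ Alift N x = y.
suff [] : P (\big[@Aadd n/A0 n]_(i < m) F i) (\sum_(i < m) Alift N (F i)) by [].
apply: big_rec2 => [|i x y _ [xN <-]]; first by rewrite /P Alift_A0.
by split; [rewrite /= geq_max FN | rewrite Alift_add // geq_max FN].
Qed.
End BigSum.

Lemma inI0 k : inI v sigma k 0.
Proof. by exists [::]; rewrite big_nil. Qed.

Lemma inI_mul_gen k f g : Igen v sigma k g -> inI v sigma k (f * g).
Proof.
by move=> gen_g; exists [:: (f, g)]; rewrite big_seq1; split=> // x /[!inE] /eqP->.
Qed.

Definition Dexp (N : nat) (b : 'I_n -> int) : 'X_{1..n} :=
  [multinom `|N%:Z - b j|%N | j < n].

Lemma Alift_Phi N b0 (b : 'I_n -> int) : (\max_(i < n) `|b i| <= N)%N ->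
  Alift N (Phi b0 b) = D0 n ^+ `|b0| * 'X_[Dexp N b].
Proof.
move=> bN; rewrite /Alift /Phi /= mulrCA mpolyXE_id /Dpow -big_split /=.
congr (_ * _); apply: eq_bigr => j _; rewrite -exprD mnmE; congr (_ ^+ _).
move: (leq_bigmax_cond (F := fun i => `|b i|%N) j isT) bN => /=.
by move: (\max_(i < n) _)%N => k; lia.
Qed.

Lemma Dexp_shiftE N (b : 'I_n -> int) i :
  b i <= N%:Z -> Dexp N (shiftE i b) = (Dexp N b + U_(i))%MM.
Proof.
move=> biN; apply/mnmP => j; rewrite mnmDE !mnmE /shiftE eq_sym.
by case: eqP => [<-|_]; lia.
Qed.

Lemma Psi_level pM pl (b : 'I_n -> int) :
  ((Psi v pM pl b).1 <= \max_(i < n) `|b i|)%N.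
Proof. by rewrite /Psi; case: ifP. Qed.

Lemma bigmax_shiftE (b : 'I_n -> int) i :
  (\max_(j < n) `|shiftE i b j| <= (\max_(j < n) `|b j|).+1)%N.
Proof.
apply/bigmax_leqP => j _ /=; move: (leq_bigmax_cond (F := fun j => `|b j|%N) j isT).
by rewrite /shiftE; move: (\max_(j < n) _)%N => k; case: (j == i) => /=; lia.
Qed.

End DirectLimit.

Lemma toR_lincomb d m (c : 'I_m -> int) (w : 'I_m -> 'rV[int]_d) :
  toR (\sum_j c j *: w j) = \sum_j (c j)%:~R *: toR (w j).
Proof.
apply/rowP => k; rewrite /toR !mxE !summxE rmorph_sum.
by apply: eq_bigr => j _; rewrite !mxE rmorphM.
Qed.

Lemma toRN d (x : 'rV[int]_d) : toR (- x) = - toR x.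
Proof. by apply/rowP => k; rewrite /toR !mxE rmorphN. Qed.

Lemma dotR_lincomb d m (u : 'rV[RR]_d) (c : 'I_m -> RR) w :
  dotR u (\sum_j c j *: w j) = \sum_j c j * dotR u (w j).
Proof.
rewrite /dotR; under eq_bigr do rewrite summxE mulr_sumr.
rewrite exchange_big; apply: eq_bigr => j _; rewrite mulr_sumr.
by apply: eq_bigr => k _; rewrite !mxE mulrCA.
Qed.

Lemma dotRN d (u x : 'rV[RR]_d) : dotR u (- x) = - dotR u x.
Proof. by rewrite /dotR -sumrN; apply: eq_bigr => k _; rewrite !mxE mulrN. Qed.

Section NefFano.
Variables (d n : nat) (v : 'I_n -> 'rV[int]_d) (sigma : {set {set 'I_n}}).
Hypothesis fan : complete_simplicial_fan v sigma.

Lemma mem_ray_in_cone S j : S \in sigma -> coneR v S (toR (v j)) -> j \in S.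
Proof.
case: fan => _ simplicial meet _ ray sigmaS vj_in_S.
have vj_in_ray : coneR v [set j] (toR (v j)).
  by exists (fun=> 1); rewrite big_set1 scale1r.
have [c [_ vj_eq]] := (meet S [set j] sigmaS (ray j) _).1 (conj vj_in_S vj_in_ray).
apply/contraT => jNS; have vj0 : toR (v j) = 0.
  rewrite vj_eq big_pred0 // => i; rewrite !inE.
  by apply/negbTE/andP => -[iS /eqP ij]; rewrite -ij iS in jNS.
have := simplicial [set j] (ray j) (fun=> 1); rewrite big_set1 scale1r vj0.
by move=> /(_ erefl j (set11 j)) /eqP; rewrite oner_eq0.
Qed.

Hypothesis nef : nef_fano v sigma.

Lemma no_cone_contains_negative_support pM pl (b : 'I_n -> int) S :
  inK v pM pl -> \sum_j b j *: v j = - pM -> \sum_j b j = - (pl + 1) ->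
  S \in sigma -> ~ (forall j, b j < 0 -> coneR v S (toR (v j))).
Proof.
move=> [c0 [c [c0_ge0 [c_ge0 [pM_eq pl_eq]]]]] bv_eq bsum_eq sigmaS neg_in_S.
have [u [u_eq1 u_le1]] := nef sigmaS.
have u_pM_le : dotR u (toR pM) <= pl%:~R.
  rewrite pM_eq dotR_lincomb pl_eq.
  suff : \sum_i c i * dotR u (toR (v i)) <= \sum_i c i by lra.
  by apply: ler_sum => i _; rewrite -[leRHS]mulr1 ler_wpM2l.
have u_pM_ge : - dotR u (toR pM) <= \sum_j ((b j)%:~R : RR).
  rewrite -dotRN -toRN -bv_eq toR_lincomb dotR_lincomb; apply: ler_sum => j _.
  have [bj_lt0|bj_ge0] := ltrP (b j) 0.
    by rewrite u_eq1 ?mulr1 ?(mem_ray_in_cone sigmaS (neg_in_S j bj_lt0)).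
  by rewrite -[leRHS]mulr1 ler_wpM2l ?ler0z.
move: u_pM_ge; rewrite -rmorph_sum bsum_eq rmorphN rmorphD /=; lra.
Qed.

End NefFano.

Lemma lincomb_shiftE (V : lmodType int) n (w : 'I_n -> V) (b : 'I_n -> int) i :
  \sum_j shiftE i b j *: w j = \sum_j b j *: w j - w i.
Proof.
rewrite /shiftE; under eq_bigr do rewrite scalerBl; rewrite sumrB; congr (_ - _).
by rewrite (bigD1 i) // eqxx scale1r /= big1 ?addr0 // => j /negbTE->; rewrite scale0r.
Qed.

Lemma sum_shiftE n (b : 'I_n -> int) i : \sum_j shiftE i b j = \sum_j b j - 1.
Proof.
rewrite /shiftE sumrB; congr (_ - _).
by rewrite (bigD1 i) // eqxx /= big1 ?addr0 // => j /negbTE->.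
Qed.

Lemma Psi_shiftE d n (v : 'I_n -> 'rV[int]_d) pM pl (b : 'I_n -> int) i :
  Psi v (pM + v i) pl (shiftE i b) =
  if (\sum_j b j *: v j == - pM) && (- pl - \sum_j b j + 1 <= 0)
  then Phi (- pl - \sum_j b j + 1) (shiftE i b) else A0 n.
Proof.
rewrite /Psi lincomb_shiftE sum_shiftE opprD subr_eq subrK.
by rewrite opprB addrA addrAC.
Qed.

(* For c = n_l and w_i = <n_M,v_i> the left side is sum_(i=0..n) (nbar.vbar_i) D_i. *)
Lemma D0_linear_form n (c : int) (w : 'I_n -> int) :
  c%:~R *: D0 n + \sum_i (w i + c)%:~R *: 'X_i = \sum_i (w i)%:~R *: 'X_i.
Proof.
rewrite /D0 scalerN scaler_sumr; under [X in _ + X]eq_bigr do rewrite intrD scalerDl.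
by rewrite big_split /= addrCA addNr addr0.
Qed.

Section Relation.
Variables (d n : nat) (v : 'I_n -> 'rV[int]_d) (sigma : {set {set 'I_n}}).
Variables (pM nM : 'rV[int]_d) (pl nl : int) (b : 'I_n -> int) (N : nat).
Hypothesis bN : (\max_(j < n) `|b j| < N)%N.

Let relation : Pol n :=
  nl%:~R *: Alift N (Psi v pM (pl + 1) b) +
  \sum_(i < n) (dotZ nM (v i) + nl)%:~R *:
     Alift N (Psi v (pM + v i) (pl + 1) (shiftE i b)).

Let b0 := - (pl + 1) - \sum_j b j.

Let bmaxN : (\max_(j < n) `|b j| <= N)%N := ltnW bN.

Let bjN j : (`|b j| < N)%N :=
  leq_ltn_trans (leq_bigmax_cond (F := fun j => `|b j|%N) j isT) bN.

Lemma relation_eq0 : (\sum_j b j *: v j != - pM) || (0 < b0) -> relation = 0.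
Proof.
move=> vanish; rewrite /relation; under eq_bigr do rewrite Psi_shiftE -/b0.
rewrite /Psi -/b0; case/orP: vanish => [/negbTE-> | b0_gt0] /=;
  last rewrite lt_geF // lezD1 lt_gtF // !andbF.
all: under eq_bigr do rewrite Alift_A0 scaler0.
all: by rewrite Alift_A0 scaler0 big1_eq addr0.
Qed.

Lemma relation_linear : \sum_j b j *: v j = - pM -> b0 < 0 ->
  relation = (D0 n ^+ absz (b0 + 1) * 'X_[Dexp N b]) *
               \sum_i (dotZ nM (v i))%:~R *: 'X_i.
Proof.
move=> bv_eq b0_lt0; set f := _ * 'X_[_].
rewrite /relation; under eq_bigr do rewrite Psi_shiftE -/b0; rewrite /Psi -/b0.
rewrite bv_eq eqxx (ltW b0_lt0) lezD1 b0_lt0 /= Alift_Phi //.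
have -> : absz b0 = (absz (b0 + 1)).+1 by lia.
have Alift_shift i : Alift N (Phi (b0 + 1) (shiftE i b)) = f * 'X_i.
  have bi_le : b i <= N%:Z by move: (bjN i); lia.
  by rewrite Alift_Phi ?(leq_trans (bigmax_shiftE b i)) // Dexp_shiftE // mpolyXD mulrA.
under eq_bigr do rewrite Alift_shift.
rewrite exprS -mulrA -/f [D0 n * f]mulrC scalerAr.
under eq_bigr do rewrite scalerAr.
by rewrite -mulr_sumr -mulrDr D0_linear_form.
Qed.

Lemma relation_boundary : \sum_j b j *: v j = - pM -> b0 = 0 ->
  relation = (nl%:~R *: 1) * 'X_[Dexp N b].
Proof.
move=> bv_eq b0_eq0.
rewrite /relation; under eq_bigr do rewrite Psi_shiftE -/b0; rewrite /Psi -/b0.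
rewrite bv_eq eqxx b0_eq0 lexx add0r ler10 /= Alift_Phi // expr0 mul1r -scalerAl mul1r.
by under eq_bigr do rewrite Alift_A0 scaler0; rewrite big1_eq addr0.
Qed.

Lemma Dexp_outside_fan :
  complete_simplicial_fan v sigma -> nef_fano v sigma -> inK v pM pl ->
  \sum_j b j *: v j = - pM -> b0 = 0 ->
  ~ exists2 S, S \in sigma & forall j, (N < Dexp N b j)%N -> coneR v S (toR (v j)).
Proof.
move=> fan nef pK bv_eq b0_eq0 [S sigmaS big_in_S].
apply: (no_cone_contains_negative_support fan nef pK bv_eq _ sigmaS).
  by move: b0_eq0; rewrite /b0; lia.
by move=> j bj_lt0; apply: big_in_S; rewrite mnmE; move: (bjN j); lia.
Qed.

Lemma relation_in_ideal :
  complete_simplicial_fan v sigma -> nef_fano v sigma -> inK v pM pl ->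
  inI v sigma N relation.
Proof.
move=> fan nef pK.
have [bv_eq|bv_neq] := eqVneq (\sum_j b j *: v j) (- pM); last first.
  by rewrite relation_eq0 ?bv_neq //; apply: inI0.
case: (ltrgtP b0 0) => [b0_lt0|b0_gt0|b0_eq0].
- by rewrite relation_linear //; apply: inI_mul_gen; left; exists nM.
- by rewrite relation_eq0 ?b0_gt0 ?orbT //; apply: inI0.
- rewrite relation_boundary //; apply: inI_mul_gen; right.
  by exists (Dexp N b); split=> //; apply: Dexp_outside_fan.
Qed.

End Relation.

Theorem proposition3p5 (d n : nat) (v : 'I_n -> 'rV[int]_d)
    (sigma : {set {set 'I_n}}) :
  complete_simplicial_fan v sigma -> minimal_generators v -> nef_fano v sigma ->
  forall (pM : 'rV[int]_d) (pl : int), inK v pM pl ->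
  forall (nM : 'rV[int]_d) (nl : int) (b : 'I_n -> int),
  Azero v sigma
    (Aadd (Ascale (nl%:~R) (Psi v pM (pl + 1) b))
          (\big[@Aadd n/A0 n]_(i < n)
              Ascale ((dotZ nM (v i) + nl)%:~R) (Psi v (pM + v i) (pl + 1) (shiftE i b)))).
Proof.
move=> fan _ nef pM pl pK nM nl b.
set N := (\max_(i < n) `|b i|).+1.
have bN : (\max_(i < n) `|b i| < N)%N := ltnSn _.
set F := fun i => Ascale ((dotZ nM (v i) + nl)%:~R) (Psi v (pM + v i) (pl + 1) (shiftE i b)).
have F_level i : ((F i).1 <= N)%N.
  exact: leq_trans (Psi_level _ _ _ _) (bigmax_shiftE b i).
have Psi_level_b : ((Psi v pM (pl + 1) b).1 <= N)%N := leqW (Psi_level _ _ _ _).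
have levels : (maxn (Psi v pM (pl + 1) b).1 (\big[@Aadd n/A0 n]_i F i).1 <= N)%N.
  by rewrite geq_max Psi_level_b Abig_level.
apply: (Azero_Alift (N := N)); first exact: levels.
rewrite Alift_add // Alift_scale Alift_big //.
under eq_bigr do rewrite Alift_scale.
exact: relation_in_ideal.
Qed.
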